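(* Let $D\subseteq\mathbb{R}^s$ be closed and $\bar y\in D$. Then for every integer $l\ge1$ and every collection of directions $v_1,\dots,v_l\in\mathbb{R}^s$ we have \[\widehat N_{T^{l-1}_D(\bar y;v_1,\dots,v_{l-1})}(v_l)\subseteq N_{T^{l-1}_D(\bar y;v_1,\dots,v_{l-1})}(v_l)\subseteq N_{T_D(\bar y)}(0)\subseteq N_D(\bar y).\]
   Context: Tangent cone: $T_\Omega(\bar z)=\{w\mid \exists t_k\downarrow0,\ w_k\to w,\ \bar z+t_kw_k\in\Omega\}$. Regular normal cone $\widehat N_\Omega(\bar z)=\{z^\ast\mid\langle z^\ast,w\rangle\le0\ \forall w\in T_\Omega(\bar z)\}$. Limiting normal cone $N_\Omega(\bar z)=\{z^\ast\mid\exists z_k\to\bar z,\ z_k\in\Omega,\ z^\ast_k\to z^\ast,\ z_k^\ast\in\widehat N_\Omega(z_k)\}$. If $\bar z\notin\Omega$, all three cones are defined to be $\emptyset$. Higher-order tangent cones: $T^0_D(\bar y)=T_D(\bar y)$ and $T^k_D(\bar y;v_1,\dots,v_k)=T_{T^{k-1}_D(\bar y;v_1,\dots,v_{k-1})}(v_k)$ for $k\ge1$. *)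

From HB Require Import structures.
From mathcomp Require Import all_boot all_order all_algebra.
From mathcomp Require Import all_classical all_reals all_analysis.
Set Implicit Arguments. Unset Strict Implicit. Unset Printing Implicit Defensive.
Import Order.TTheory GRing.Theory Num.Theory.
Import numFieldNormedType.Exports.
Local Open Scope classical_set_scope.
Local Open Scope ring_scope.

Section Cones.
Variables (R : realType) (s : nat).
Local Notation vec := 'rV[R]_s.

Definition dotv (a b : vec) : R := \sum_(i < s) a 0 i * b 0 i.

(* Tangent (Bouligand) cone; empty when z is not in Omega. *)
Definition tangent_cone (Om : set vec) (z : vec) : set vec :=
  fun w => Om z /\
    exists (t : nat -> R) (wk : nat -> vec),
      (forall k, 0 < t k) /\ t @ \oo --> (0 : R) /\ wk @ \oo --> w /\
      (forall k, Om (z + t k *: wk k)).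

(* Regular (Fréchet) normal cone; empty when z is not in Omega. *)
Definition regular_normal_cone (Om : set vec) (z : vec) : set vec :=
  fun zs => Om z /\ forall w, tangent_cone Om z w -> dotv zs w <= 0.

(* Limiting (Mordukhovich) normal cone; empty when z is not in Omega. *)
Definition limiting_normal_cone (Om : set vec) (z : vec) : set vec :=
  fun zs => Om z /\
    exists (zk : nat -> vec) (zsk : nat -> vec),
      zk @ \oo --> z /\ (forall k, Om (zk k)) /\ zsk @ \oo --> zs /\
      (forall k, regular_normal_cone Om (zk k) (zsk k)).

(* Higher-order tangent cones T^k_D(y; v 1, ..., v k), directions indexed
   from 1: T^0 = T_D(y), T^(k+1) = T_{T^k}(v (k+1)). *)
Fixpoint higher_tangent_cone (D : set vec) (y : vec) (v : nat -> vec) (k : nat)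
  : set vec :=
  match k with
  | 0 => tangent_cone D y
  | k'.+1 => tangent_cone (higher_tangent_cone D y v k') (v k'.+1)
  end.

End Cones.

(* The heart of the matter is that, for closed C, every limiting normal to
   T_C(x) at any w is a limiting normal to C at x.  Limiting normal cones are
   closed, so it suffices to take a regular normal v to T_C(x) at w.  Because v
   is a regular normal, for small tau the points of T_C(x) in the Euclidean ball
   around u = w + tau v through w lie within eta tau of w.  Let t_k -> 0 and
   w_k -> w with x + t_k w_k in C, and project u onto the blow-ups (C - x)/t_k.
   Cluster points of the projections q_k are tangent vectors in that ball, so
   q_k comes within 2 eta tau of w for infinitely many k; for such k,
   (u - q_k)/tau is a proximal, hence regular, normal to C at x + t_k q_k, and
   it is within 2 eta of v.
   The theorem follows by induction along T^k = T_{T^(k-1)}(v_k), using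
   T_{T_D(y)}(0) = T_D(y) for the closed cone T_D(y). *)

From HB Require Import structures.
From mathcomp Require Import all_boot all_order all_algebra.
From mathcomp Require Import all_classical all_reals all_analysis.
From mathcomp Require Import ring lra.
Set Implicit Arguments. Unset Strict Implicit. Unset Printing Implicit Defensive.
Import Order.TTheory GRing.Theory Num.Theory Num.Def.
Import numFieldNormedType.Exports.
Local Open Scope classical_set_scope.
Local Open Scope ring_scope.

Lemma closed_normP (K : numFieldType) (V : normedModType K) (A : set V) :
  closed A <->
  forall q, (forall e : K, 0 < e -> exists2 y, A y & `|y - q| < e) -> A q.
Proof.
split=> [cA q Aq|Aclosed q clq].
  apply: cA => B /nbhs_ballP [e e0 qeB].
  have [y Ay yq] := Aq e e0; exists y; split => //; apply: qeB.
  by rewrite -ball_normE /ball_ /= distrC.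
apply: Aclosed => e e0; have [y [Ay]] := clq _ (nbhsx_ballx q e e0).
by rewrite -ball_normE /ball_ /= distrC; exists y.
Qed.

Lemma cluster_sub_closed (T : topologicalType) (F : set_system T) (A : set T) :
  closed A -> F A -> cluster F `<=` A.
Proof. by move=> cA FA q; rewrite clusterE (closure_id A).1 //; apply. Qed.

Lemma cluster_seq_le (T : topologicalType) (K : realFieldType) (u : nat -> T)
    (f : T -> K) c q :
  continuous f -> cluster (u @ \oo) q -> (\forall k \near \oo, f (u k) <= c) ->
  f q <= c.
Proof.
move=> fc uq ufc; have uA : (u @ \oo) [set p | f p <= c] := ufc.
apply: (cluster_sub_closed _ uA uq).
by apply: (@preimage_closed _ _ f [set r | r <= c]) => [p _|];
  [exact: fc | exact: closed_le].
Qed.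

Lemma cluster_seq_ge (T : topologicalType) (K : realFieldType) (u : nat -> T)
    (f : T -> K) c q :
  continuous f -> cluster (u @ \oo) q -> (\forall k \near \oo, c <= f (u k)) ->
  c <= f q.
Proof.
move=> fc uq ufc; have uA : (u @ \oo) [set p | c <= f p] := ufc.
apply: (cluster_sub_closed _ uA uq).
by apply: (@preimage_closed _ _ f [set r | c <= r]) => [p _|];
  [exact: fc | exact: closed_ge].
Qed.

Lemma cluster_near (K : numFieldType) (V : normedModType K) (u : nat -> V) q
    (P : nat -> Prop) :
  cluster (u @ \oo) q -> (\forall k \near \oo, P k) ->
  forall e : K, 0 < e -> exists k, P k /\ `|u k - q| < e.
Proof.
move=> uq Pk e e0.
have uP : (u @ \oo) (u @` P) by apply: filterS Pk => k Pk'; exists k.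
have [_ [[k Pk' <-] uke]] := uq _ _ uP (nbhsx_ballx q e e0).
by exists k; split => //; move: uke; rewrite -ball_normE /ball_ /= distrC.
Qed.

Lemma cvg_dist_lt_natSinv (K : archiRealFieldType) (V : normedModType K)
    (u : nat -> V) l :
  (forall k, `|u k - l| < k.+1%:R^-1) -> u @ \oo --> l.
Proof.
move=> ul; apply/cvgrPdist_lt => e e0; near=> k; rewrite distrC.
apply: lt_trans (ul k) _; near: k; exact: (near_infty_natSinv_lt (PosNum e0)).
Unshelve. all: by end_near.
Qed.

Section ConesInRowVectors.
Variables (R : realType) (s : nat).
Local Notation vec := 'rV[R]_s.
Implicit Types a b c : vec.

Lemma dotvC a b : dotv a b = dotv b a.
Proof. by apply: eq_bigr => i _; rewrite mulrC. Qed.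

Lemma dotvDl a b c : dotv (a + b) c = dotv a c + dotv b c.
Proof. by rewrite /dotv -big_split; apply: eq_bigr => i _; rewrite mxE mulrDl. Qed.

Lemma dotvNl a b : dotv (- a) b = - dotv a b.
Proof. by rewrite /dotv -sumrN; apply: eq_bigr => i _; rewrite mxE mulNr. Qed.

Lemma dotvZl (k : R) a b : dotv (k *: a) b = k * dotv a b.
Proof. by rewrite /dotv mulr_sumr; apply: eq_bigr => i _; rewrite mxE mulrA. Qed.

Lemma dotvBl a b c : dotv (a - b) c = dotv a c - dotv b c.
Proof. by rewrite dotvDl dotvNl. Qed.

Lemma dotvZr (k : R) a b : dotv a (k *: b) = k * dotv a b.
Proof. by rewrite dotvC dotvZl dotvC. Qed.

Lemma dotvBr a b c : dotv a (b - c) = dotv a b - dotv a c.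
Proof. by rewrite dotvC dotvBl !(dotvC a). Qed.

Lemma dotvBB a b : dotv (a - b) (a - b) = dotv a a - 2 * dotv a b + dotv b b.
Proof. by rewrite dotvBl !dotvBr (dotvC b a); ring. Qed.

Lemma dotvv_ge0 a : 0 <= dotv a a.
Proof. by apply: sumr_ge0 => i _; rewrite -expr2 sqr_ge0. Qed.

(* [`|a|] is the sup norm of ['rV_s], whereas [dotv a a] is the squared
   Euclidean norm. *)
Lemma norm_entry_le a i : `|a 0 i| <= `|a|.
Proof.
have /mapP[j _ ->] : `|a 0 i| \in [seq `|a k.1 k.2| | k : 'I_1 * 'I_s].
  by apply/mapP; exists (ord0, i) => //=; rewrite mem_enum.
by rewrite [leRHS]/normr /= mx_normrE; apply/bigmax_geP; right; exists j.
Qed.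

Lemma ler_norm_dotv a b : `|dotv a b| <= s%:R * (`|a| * `|b|).
Proof.
apply: le_trans (ler_norm_sum _ _ _) _.
have -> : s%:R * (`|a| * `|b|) = \sum_(i < s) (`|a| * `|b|).
  by rewrite sumr_const card_ord mulr_natl.
apply: ler_sum => i _.
by rewrite normrM; apply: ler_pM => //; exact: norm_entry_le.
Qed.

Lemma dotvv_le a : dotv a a <= s%:R * `|a| ^+ 2.
Proof. by rewrite expr2; apply: le_trans (ler_norm _) (ler_norm_dotv a a). Qed.

Lemma sqr_norm_le_dotv a : `|a| ^+ 2 <= dotv a a.
Proof.
have [a0|an0] := eqVneq (mx_norm a) 0.
  by rewrite /normr /= a0 expr0n /= dotvv_ge0.
have [[i j] /= aij] := mx_norm_neq0 an0.
rewrite /normr /= aij (ord1 i) /dotv (bigD1 j) //= real_normK ?num_real // lerDl.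
by apply: sumr_ge0 => k _; rewrite -expr2 sqr_ge0.
Qed.

Lemma norm_le_of_dotvv a (c : R) : 0 <= c -> dotv a a <= c ^+ 2 -> `|a| <= c.
Proof.
move=> c0 ac; rewrite -(ler_sqr (normr_ge0 a : `|a| \is Num.nneg)) ?nnegrE //.
exact: le_trans (sqr_norm_le_dotv a) ac.
Qed.

Lemma cvg_dotv (T : Type) (F : set_system T) {FF : Filter F} (f g : T -> vec) a b :
  f @ F --> a -> g @ F --> b -> (fun x => dotv (f x) (g x)) @ F --> dotv a b.
Proof.
move=> fa gb; apply: (cvg_big add_continuous) => i _; apply: cvgM.
  exact: (continuous_cvg _ (@coord_continuous R 1 s 0 i a) fa).
exact: (continuous_cvg _ (@coord_continuous R 1 s 0 i b) gb).
Qed.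

Lemma continuous_dotv a : continuous (dotv a).
Proof.
move=> q; have dq : (fun y : vec => dotv a y) @ nbhs q --> dotv a q.
  exact: (cvg_dotv (cvg_cst a) (@cvg_id _ (nbhs q))).
exact: dq.
Qed.

Lemma continuous_sqr_dist a : continuous (fun q : vec => dotv (a - q) (a - q)).
Proof.
move=> q; have aq : (fun y : vec => a - y) @ nbhs q --> a - q.
  by apply: cvgB; [exact: cvg_cst | exact: cvg_id].
exact: (cvg_dotv aq aq).
Qed.

Lemma continuous_dist a : continuous (fun q : vec => `|q - a|).
Proof.
move=> q; have qa : (fun y : vec => `|y - a|) @ nbhs q --> `|q - a|.
  by apply: cvg_norm; apply: cvgB; [exact: cvg_id | exact: cvg_cst].
exact: qa.
Qed.

Lemma tangent_coneP (Om : set vec) z w : tangent_cone Om z w <->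
  Om z /\ forall e d : R, 0 < e -> 0 < d -> exists t w',
    [/\ 0 < t, t < d, `|w' - w| < e & Om (z + t *: w')].
Proof.
split=> [[Oz [t [wk [t_gt0 [t_cvg0 [wk_cvg Ow]]]]]]|[Oz approx]].
  split => // e d e0 d0.
  move/cvgrPdist_lt: t_cvg0 => /(_ d d0) t_small.
  move/cvgrPdist_lt: wk_cvg => /(_ e e0) wk_near.
  have [k [tk wk_k]] := filter_ex (filterI t_small wk_near).
  exists (t k), (wk k); split => //; last by rewrite distrC.
  by move: tk; rewrite sub0r normrN gtr0_norm.
split => //.
have /choice [f Hf] : forall k : nat, exists p : R * vec,
    [/\ 0 < p.1, p.1 < k.+1%:R^-1, `|p.2 - w| < k.+1%:R^-1 & Om (z + p.1 *: p.2)].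
  move=> k; have [t [w' ?]] := approx _ _ (harmonic_gt0 k) (harmonic_gt0 k).
  by exists (t, w').
exists (fun k => (f k).1), (fun k => (f k).2).
split; first by move=> k; case: (Hf k).
split.
  by apply: cvg_dist_lt_natSinv => k; case: (Hf k) => ? ? _ _; rewrite subr0 gtr0_norm.
split; first by apply: cvg_dist_lt_natSinv => k; case: (Hf k).
by move=> k; case: (Hf k).
Qed.

Lemma tangent_cone_closed (Om : set vec) z : closed (tangent_cone Om z).
Proof.
apply/closed_normP => w approx.
have [_ /tangent_coneP [Oz _] _] := approx 1 ltr01.
apply/tangent_coneP; split => // e d e0 d0.
have [w1 /tangent_coneP [_ Tw1] w1w] := approx _ (divr_gt0 e0 (ltr0Sn _ 1)).
have [t [w' [t0 td w'w1 Ow']]] := Tw1 _ _ (divr_gt0 e0 (ltr0Sn _ 1)) d0.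
exists t, w'; split => //.
rewrite -(subrK w1 w') -addrA; apply: le_lt_trans (ler_normD _ _) _.
by rewrite (splitr e) ltrD.
Qed.

Lemma tangent_cone0 (Om : set vec) z : Om z -> tangent_cone Om z 0.
Proof.
move=> Oz; apply/tangent_coneP; split => // e d e0 d0.
exists (d / 2), 0; rewrite subrr normr0 scaler0 addr0.
by split => //; [rewrite divr_gt0 | rewrite ltr_pdivrMr // ltr_pMr // ltr1n].
Qed.

Lemma tangent_coneZ (Om : set vec) z w (lam : R) :
  tangent_cone Om z w -> 0 < lam -> tangent_cone Om z (lam *: w).
Proof.
move=> /tangent_coneP [Oz Tw] lam0; apply/tangent_coneP; split => // e d e0 d0.
have [t [w' [t0 td w'w Ow']]] := Tw _ _ (divr_gt0 e0 lam0) (mulr_gt0 d0 lam0).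
exists (t / lam), (lam *: w'); split.
- by rewrite divr_gt0.
- by rewrite ltr_pdivrMr.
- by rewrite -scalerBr normrZ gtr0_norm // -ltr_pdivlMl // mulrC.
- by rewrite scalerA mulfVK ?gt_eqF.
Qed.

Lemma tangent_cone_closed_cone (K : set vec) : closed K -> K 0 ->
  (forall w (lam : R), K w -> 0 < lam -> K (lam *: w)) -> tangent_cone K 0 = K.
Proof.
move=> cK K0 Kcone; apply/seteqP; split => w.
  move=> /tangent_coneP [_ Tw]; apply: (closed_normP K).1 cK _ _ => e e0.
  have [t [w' [t0 _ w'w Kw']]] := Tw e 1 e0 ltr01.
  have t0' : 0 < t^-1 by rewrite invr_gt0.
  exists w' => //; move: (Kcone _ _ Kw' t0').
  by rewrite add0r scalerA mulVf ?gt_eqF // scale1r.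
move=> Kw; apply/tangent_coneP; split => // e d e0 d0.
exists (d / 2), w; rewrite subrr normr0 add0r.
have d2 : 0 < d / 2 by rewrite divr_gt0.
by split => //; [rewrite ltr_pdivrMr // ltr_pMr // ltr1n | exact: Kcone].
Qed.

Lemma tangent_cone_cluster (Om : set vec) z (t : nat -> R) (w : nat -> vec) q :
  Om z -> (forall k, 0 < t k) -> t @ \oo --> 0 ->
  (forall k, Om (z + t k *: w k)) -> cluster (w @ \oo) q -> tangent_cone Om z q.
Proof.
move=> Oz t_gt0 t_cvg0 Ow wq; apply/tangent_coneP; split => // e d e0 d0.
have t_small : \forall k \near \oo, t k < d.
  move/cvgrPdist_lt: t_cvg0 => /(_ d d0); apply: filterS => k.
  by rewrite sub0r normrN (gtr0_norm (t_gt0 k)).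
have [k [tk wkq]] := cluster_near wq t_small e0.
by exists (t k), (w k).
Qed.

Lemma limiting_normal_coneP (Om : set vec) z zs : limiting_normal_cone Om z zs <->
  Om z /\ forall e : R, 0 < e -> exists p n,
    [/\ `|p - z| < e, regular_normal_cone Om p n & `|n - zs| < e].
Proof.
split=> [[Oz [zk [zsk [zk_cvg [Ozk [zsk_cvg Nk]]]]]]|[Oz approx]].
  split => // e e0.
  move/cvgrPdist_lt: zk_cvg => /(_ e e0) zk_near.
  move/cvgrPdist_lt: zsk_cvg => /(_ e e0) zsk_near.
  have [k [? ?]] := filter_ex (filterI zk_near zsk_near).
  by exists (zk k), (zsk k); split; rewrite // distrC.
split => //.
have /choice [f Hf] : forall k : nat, exists p : vec * vec,
    [/\ `|p.1 - z| < k.+1%:R^-1, regular_normal_cone Om p.1 p.2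
      & `|p.2 - zs| < k.+1%:R^-1].
  by move=> k; have [p [n ?]] := approx _ (harmonic_gt0 k); exists (p, n).
exists (fun k => (f k).1), (fun k => (f k).2).
split; first by apply: cvg_dist_lt_natSinv => k; case: (Hf k).
split; first by move=> k; case: (Hf k) => _ [].
split; first by apply: cvg_dist_lt_natSinv => k; case: (Hf k).
by move=> k; case: (Hf k).
Qed.

Lemma regular_sub_limiting_normal_cone (Om : set vec) z :
  regular_normal_cone Om z `<=` limiting_normal_cone Om z.
Proof.
move=> zs Nzs; apply/limiting_normal_coneP; split; first by case: Nzs.
by move=> e e0; exists z, zs; rewrite !subrr normr0.
Qed.

Lemma limiting_normal_cone_closed (Om : set vec) z :
  closed (limiting_normal_cone Om z).
Proof.
apply/closed_normP => zs approx.
have [_ /limiting_normal_coneP [Oz _] _] := approx 1 ltr01.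
apply/limiting_normal_coneP; split => // e e0.
have e2 : 0 < e / 2 by rewrite divr_gt0.
have [zs' /limiting_normal_coneP [_ Nzs'] zs'zs] := approx _ e2.
have [p [n [pz Nn nzs']]] := Nzs' _ e2.
exists p, n; split => //.
  by apply: lt_trans pz _; rewrite ltr_pdivrMr // ltr_pMr // ltr1n.
rewrite -(subrK zs' n) -addrA; apply: le_lt_trans (ler_normD _ _) _.
by rewrite (splitr e) ltrD.
Qed.

Lemma bounded_cluster (u : nat -> vec) (M : R) :
  (\forall k \near \oo, `|u k| <= M) -> exists q, cluster (u @ \oo) q.
Proof.
move=> uM; pose A := closed_ball_ normr (0 : vec) M.
have cA : compact A.
  apply: bounded_closed_compact; last exact: closed_closed_ball_.
  exists M; split; first exact: num_real.
  move=> M' MM' y; rewrite /A /closed_ball_ /= sub0r normrN => yM.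
  exact: le_trans yM (ltW MM').
have uA : (u @ \oo) A.
  by apply: filterS uM => k; rewrite /A /closed_ball_ /= sub0r normrN.
by have [q [_ ?]] := cA _ _ uA; exists q.
Qed.

Lemma closed_nearest_point (C : set vec) u w0 : closed C -> C w0 ->
  exists2 q, C q & forall q', C q' ->
    dotv (u - q) (u - q) <= dotv (u - q') (u - q').
Proof.
move=> cC Cw0.
(* Points of [C] outside the ball of radius [rho] around [u] are farther from
   [u] than [w0] is. *)
pose rho := (s%:R + 1) * `|u - w0|.
pose A := C `&` closed_ball_ normr u rho.
have rho_ge : s%:R * `|u - w0| ^+ 2 <= rho ^+ 2.
  by rewrite /rho exprMn ler_wpM2r ?sqr_ge0 //; nra.
have Aw0 : A w0 by split => //; rewrite /closed_ball_ /rho /= mulrDl mul1r lerDr.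
have cA : compact A.
  apply: bounded_closed_compact; last by apply: closedI => //; exact: closed_closed_ball_.
  exists (`|u| + rho); split; first exact: num_real.
  move=> M' MM' y [_ uy]; apply: le_trans (ltW MM').
  rewrite -[y](subKr u); apply: le_trans (ler_normB _ _) _.
  by rewrite lerD2l.
have A0 : A !=set0 by exists w0.
have [q Aq qmin] := EVT_min_rV A0 cA (continuous_subspaceT (@continuous_sqr_dist u)).
have [Cq _] : A q by rewrite inE in Aq.
exists q => // q' Cq'; have [uq'|uq'] := leP `|u - q'| rho.
  by apply: qmin; rewrite inE.
apply: le_trans (qmin _ (mem_set Aw0)) _; apply: le_trans (dotvv_le _) _.
apply: le_trans rho_ge (le_trans _ (sqr_norm_le_dotv _)).
have rho0 : 0 <= rho by rewrite mulr_ge0 // addr_ge0.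
by rewrite ler_sqr ?nnegrE // ltW.
Qed.

Lemma closed_affine_preimage (C : set vec) x (t : R) :
  closed C -> closed [set q | C (x + t *: q)].
Proof.
apply: preimage_closed => q _.
have affine_cont : (fun y : vec => x + t *: y) @ nbhs q --> x + t *: q.
  by apply: cvgD; [exact: cvg_cst | apply: cvgZr; exact: cvg_id].
exact: affine_cont.
Qed.

Lemma proximal_normal_regular (C : set vec) p n (c : R) : C p -> 0 <= c ->
  (forall y, C y -> 2 * dotv n (y - p) <= c * dotv (y - p) (y - p)) ->
  regular_normal_cone C p n.
Proof.
move=> Cp c0 prox; split => // w [_ [t [wk [t_gt0 [t_cvg0 [wk_cvg Cwk]]]]]].
have le_k k : dotv n (wk k) <= c / 2 * (t k * dotv (wk k) (wk k)).
  have := prox _ (Cwk k); rewrite addrAC subrr add0r dotvZl !dotvZr => ineq.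
  have := t_gt0 k; have := dotvv_ge0 (wk k); nra.
have lhs_cvg : (fun k => dotv n (wk k)) @ \oo --> dotv n w.
  exact: cvg_dotv (cvg_cst n) wk_cvg.
have rhs_cvg : (fun k => c / 2 * (t k * dotv (wk k) (wk k))) @ \oo --> 0.
  rewrite -(mulr0 (c / 2)) -(mul0r (dotv w w)).
  by apply: cvgM; [exact: cvg_cst | apply: cvgM => //; exact: cvg_dotv].
by apply: (ler_cvg_to lhs_cvg rhs_cvg); near=> k; exact: le_k.
Unshelve. all: by end_near.
Qed.

Lemma nearest_point_regular_normal (C : set vec) x u q (t tau : R) :
  0 < t -> 0 < tau -> C (x + t *: q) ->
  (forall q', C (x + t *: q') -> dotv (u - q) (u - q) <= dotv (u - q') (u - q')) ->
  regular_normal_cone C (x + t *: q) (tau^-1 *: (u - q)).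
Proof.
move=> t0 tau0 Cq qmin.
have c0 : 0 <= (tau * t)^-1 by rewrite invr_ge0 mulr_ge0 // ltW.
apply: proximal_normal_regular Cq c0 _ => y Cy.
pose q' := t^-1 *: (y - x).
have y_eq : y = x + t *: q' by rewrite /q' scalerA mulfV ?gt_eqF // scale1r addrC subrK.
have yp : y - (x + t *: q) = t *: (q' - q).
  by rewrite {1}y_eq scalerBr opprD addrACA subrr add0r.
have uq' : u - q' = (u - q) - (q' - q) by rewrite opprB addrA subrK.
have := qmin q'; rewrite -y_eq uq' (dotvBB (u - q)) => /(_ Cy) ineq.
have key : 2 * dotv (u - q) (q' - q) <= dotv (q' - q) (q' - q) by lra.
have c0' : 0 <= tau^-1 * t by rewrite mulr_ge0 // ltW // invr_gt0.
have := ler_wpM2l c0' key.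
rewrite yp !dotvZl !dotvZr.
have -> : (tau * t)^-1 * (t * (t * dotv (q' - q) (q' - q))) =
    tau^-1 * t * dotv (q' - q) (q' - q) by field; rewrite !gt_eqF.
lra.
Qed.

Lemma dotv_ball_bounds a v (h eta : R) : 0 < h -> 0 < eta ->
  dotv a a <= 2 * h * dotv v a -> eta * h < `|a| ->
  `|a| <= 2 * s%:R * `|v| * h /\ eta / 2 <= dotv v (`|a|^-1 *: a).
Proof.
move=> h0 eta0 av etaa; have a_gt0 : 0 < `|a| by apply: lt_trans etaa; rewrite mulr_gt0.
have aa := sqr_norm_le_dotv a; rewrite expr2 in aa.
split.
  have va : dotv v a <= s%:R * `|v| * `|a|.
    by rewrite -mulrA; apply: le_trans (ler_norm _) (ler_norm_dotv _ _).
  rewrite -(ler_pM2r a_gt0); apply: le_trans aa (le_trans av _).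
  have := ler_wpM2l (ltW h0) va; lra.
rewrite dotvZr -(ler_pM2l a_gt0) mulVKf ?gt_eqF //.
have etaa' : eta * h * `|a| < `|a| * `|a| by rewrite ltr_pM2r.
have : h * (`|a| * eta) < h * (2 * dotv v a) by lra.
rewrite ltr_pM2l //; lra.
Qed.

Lemma regular_normal_cone_bound (T : set vec) w v (eta : R) :
  regular_normal_cone T w v -> 0 < eta ->
  exists2 tau : R, 0 < tau & forall q, T q ->
    dotv (w + tau *: v - q) (w + tau *: v - q) <= dotv (tau *: v) (tau *: v) ->
    `|q - w| <= eta * tau.
Proof.
move=> [Tw Nv] eta0.
suff [tau tau0 Htau] : exists2 tau : R, 0 < tau & forall q, T q ->
    dotv (q - w) (q - w) <= 2 * tau * dotv v (q - w) -> `|q - w| <= eta * tau.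
  exists tau => // q Tq; rewrite addrAC addrC -opprB (dotvBB (tau *: v)).
  by rewrite !dotvZl !dotvZr => ball; apply: Htau => //; lra.
apply: contrapT => no_tau.
have /choice [g Hg] : forall k : nat, exists q, [/\ T q,
    dotv (q - w) (q - w) <= 2 * harmonic k * dotv v (q - w)
    & eta * harmonic k < `|q - w|].
  move=> k; apply: contrapT => no_q; apply: no_tau.
  exists (harmonic k) => [|q Tq qv]; first exact: harmonic_gt0.
  by rewrite leNgt; apply/negP => qw; apply: no_q; exists q.
pose r k := `|g k - w|.
pose d k := (r k)^-1 *: (g k - w).
have bounds k : r k <= 2 * s%:R * `|v| * harmonic k /\ eta / 2 <= dotv v (d k).
  by case: (Hg k) => _; apply: dotv_ball_bounds; [exact: harmonic_gt0 | exact: eta0].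
have r_gt0 k : 0 < r k.
  by case: (Hg k) => _ _; apply: lt_trans; rewrite mulr_gt0 ?harmonic_gt0.
have r_cvg0 : r @ \oo --> 0.
  apply: (@squeeze_cvgr _ _ _ _ (cst 0) (fun k => 2 * s%:R * `|v| * harmonic k)).
  - by apply: nearW => // k; rewrite ltW ?r_gt0 ?(bounds k).1.
  - exact: cvg_cst.
  - rewrite -(mulr0 (2 * s%:R * `|v|)).
    by apply: cvgM; [exact: cvg_cst | exact: cvg_harmonic].
have [dd ddc] : exists dd, cluster (d @ \oo) dd.
  apply: (@bounded_cluster _ 1); near=> k.
  by rewrite normrZ gtr0_norm ?invr_gt0 // mulVf ?gt_eqF.
have Tdd : tangent_cone T w dd.
  apply: (tangent_cone_cluster Tw r_gt0 r_cvg0 _ ddc) => k.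
  have rk0 := lt0r_neq0 (r_gt0 k).
  by rewrite /d /= scalerA mulfV // scale1r addrC subrK; case: (Hg k).
have dv_near : \forall k \near \oo, eta / 2 <= dotv v (d k).
  by near=> k; exact: (bounds k).2.
have := cluster_seq_ge (@continuous_dotv v) ddc dv_near.
by have := Nv _ Tdd; lra.
Unshelve. all: by end_near.
Qed.

Section ProjectionsOntoBlowups.
Variables (C : set vec) (x w u : vec) (t : nat -> R) (wk qk : nat -> vec).
Hypotheses (Cx : C x) (t_gt0 : forall k, 0 < t k) (t_cvg0 : t @ \oo --> 0).
Hypotheses (wk_cvg : wk @ \oo --> w) (C_wk : forall k, C (x + t k *: wk k)).
Hypotheses (C_qk : forall k, C (x + t k *: qk k))
  (qk_min : forall k q, C (x + t k *: q) ->
     dotv (u - qk k) (u - qk k) <= dotv (u - q) (u - q)).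

Let u_wk_cvg : (fun k => u - wk k) @ \oo --> u - w.
Proof. by apply: cvgB; [exact: cvg_cst | exact: wk_cvg]. Qed.

Lemma blowup_projection_bounded :
  exists2 M : R, 0 <= M & \forall k \near \oo, `|qk k| <= M.
Proof.
pose beta := `|u - w| + 1.
have beta0 : 0 <= beta by rewrite addr_ge0.
exists (`|u| + (s%:R + 1) * beta); first by rewrite addr_ge0 // mulr_ge0 // addr_ge0.
have uw_beta : `|u - w| < beta by rewrite ltrDl.
apply: filterS (cvgr_lt _ (cvg_norm u_wk_cvg) _ uw_beta) => k /ltW uwk.
have uwk2 : `|u - wk k| ^+ 2 <= beta ^+ 2 by rewrite ler_sqr ?nnegrE.
have dist_le : dotv (u - qk k) (u - qk k) <= ((s%:R + 1) * beta) ^+ 2.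
  apply: le_trans (qk_min (C_wk k)) (le_trans (dotvv_le _) _).
  apply: le_trans (ler_wpM2l (ler0n _ s) uwk2) _.
  by rewrite exprMn ler_wpM2r ?sqr_ge0 //; nra.
rewrite -[qk k](subKr u); apply: le_trans (ler_normB _ _) _.
by rewrite lerD2l norm_le_of_dotvv // mulr_ge0 // addr_ge0.
Qed.

Lemma blowup_projection_cluster q : cluster (qk @ \oo) q ->
  tangent_cone C x q /\ dotv (u - q) (u - q) <= dotv (u - w) (u - w).
Proof.
move=> qkq; split; first exact: tangent_cone_cluster Cx t_gt0 t_cvg0 C_qk qkq.
apply/ler_addgt0Pr => e e0; apply: cluster_seq_le (@continuous_sqr_dist u) qkq _.
have uw_e : dotv (u - w) (u - w) < dotv (u - w) (u - w) + e by rewrite ltrDl.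
apply: filterS (cvgr_lt _ (cvg_dotv u_wk_cvg u_wk_cvg) _ uw_e) => k /ltW.
exact: le_trans (qk_min (C_wk k)).
Qed.

Lemma blowup_projection_frequently_near (r r' : R) : r < r' ->
  (forall q, tangent_cone C x q ->
     dotv (u - q) (u - q) <= dotv (u - w) (u - w) -> `|q - w| <= r) ->
  ~ \forall k \near \oo, r' < `|qk k - w|.
Proof.
move=> rr' near_w qk_far; have [M _ qkM] := blowup_projection_bounded.
have [q qkq] := bounded_cluster qkM.
have [Tq uq] := blowup_projection_cluster qkq.
have far_ge : \forall k \near \oo, r' <= `|qk k - w| by apply: filterS qk_far => k /ltW.
have := cluster_seq_ge (@continuous_dist w) qkq far_ge.
by have := near_w q Tq uq; lra.
Qed.

End ProjectionsOntoBlowups.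

Lemma regular_normal_tangent_cone_sub_limiting (C : set vec) x w : closed C ->
  regular_normal_cone (tangent_cone C x) w `<=` limiting_normal_cone C x.
Proof.
move=> cC v Nv; have [[Cx [t [wk [t_gt0 [t_cvg0 [wk_cvg C_wk]]]]]] _] := Nv.
apply/limiting_normal_coneP; split => // e e0.
pose eta := e / 4; have eta0 : 0 < eta by rewrite divr_gt0.
have [tau tau0 Ntau] := regular_normal_cone_bound Nv eta0.
pose u := w + tau *: v.
have /choice [qk qk_nearest] : forall k, exists q, C (x + t k *: q) /\
    forall q', C (x + t k *: q') -> dotv (u - q) (u - q) <= dotv (u - q') (u - q').
  move=> k; have Ck := closed_affine_preimage (x := x) (t := t k) cC.
  by have [q] := closed_nearest_point u Ck (C_wk k); exists q.
have C_qk k := (qk_nearest k).1; have qk_min k := (qk_nearest k).2.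
have [M M0 qkM] := blowup_projection_bounded wk_cvg C_wk qk_min.
have uw : u - w = tau *: v by rewrite /u addrC addKr.
have etatau : eta * tau < 2 * eta * tau by rewrite -mulrA ltr_pMl ?mulr_gt0 ?ltr1n.
have := blowup_projection_frequently_near Cx t_gt0 t_cvg0 wk_cvg C_wk C_qk qk_min etatau.
rewrite uw => /(_ Ntau) not_far.
have M1 : 0 < M + 1 by lra.
have t_small := cvgr_lt _ t_cvg0 _ (divr_gt0 e0 M1).
have [k [[qkM' tk] qkw]] : exists k, (`|qk k| <= M /\ t k < e / (M + 1)) /\
    `|qk k - w| <= 2 * eta * tau.
  apply: contrapT => no_k; apply: not_far; near=> k.
  rewrite ltNge; apply/negP => qkw; apply: no_k; exists k; split => //.
  by split; near: k; [exact: qkM | exact: t_small].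
exists (x + t k *: qk k), (tau^-1 *: (u - qk k)); split.
- rewrite addrAC subrr add0r normrZ gtr0_norm //.
  apply: le_lt_trans (ler_wpM2l (ltW (t_gt0 k)) qkM') _.
  by move: tk; rewrite ltr_pdivlMr //; have := t_gt0 k; lra.
- exact: (nearest_point_regular_normal (t_gt0 k) tau0 (C_qk k) (qk_min k)).
- have -> : tau^-1 *: (u - qk k) - v = tau^-1 *: (w - qk k).
    by rewrite /u addrAC scalerDr scalerA mulVf ?gt_eqF // scale1r addrK.
  rewrite normrZ gtr0_norm ?invr_gt0 // distrC -ltr_pdivlMl ?invr_gt0 // invrK.
  apply: le_lt_trans qkw _; have : 0 < e * tau by rewrite mulr_gt0.
  rewrite /eta; lra.
Unshelve. all: by end_near.
Qed.

Lemma limiting_normal_tangent_cone_sub (C : set vec) x w : closed C ->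
  limiting_normal_cone (tangent_cone C x) w `<=` limiting_normal_cone C x.
Proof.
move=> cC v /limiting_normal_coneP [[Cx _] approx].
apply: ((closed_normP _).1 (@limiting_normal_cone_closed C x) v) => e e0.
have [p [n [_ Nn nv]]] := approx e e0.
by exists n => //; exact: regular_normal_tangent_cone_sub_limiting Nn.
Qed.

Lemma limiting_normal_higher_tangent_cone_sub (D : set vec) y (v : nat -> vec) k :
  limiting_normal_cone (higher_tangent_cone D y v k) (v k.+1)
    `<=` limiting_normal_cone (tangent_cone D y) (v 1%N).
Proof.
elim: k => [|k IH] //= zs Nzs; apply: IH; apply: limiting_normal_tangent_cone_sub Nzs.
by case: k => [|k]; exact: tangent_cone_closed.
Qed.

End ConesInRowVectors.

Unset Implicit Arguments.

Theorem lemma4p3 (R : realType) (s : nat) (D : set 'rV[R]_s) (y : 'rV[R]_s)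
  (hD : closed D) (hy : D y) (l : nat) (hl : (1 <= l)%N)
  (v : nat -> 'rV[R]_s) :
  regular_normal_cone (higher_tangent_cone D y v l.-1) (v l)
    `<=` limiting_normal_cone (higher_tangent_cone D y v l.-1) (v l) /\
  limiting_normal_cone (higher_tangent_cone D y v l.-1) (v l)
    `<=` limiting_normal_cone (tangent_cone D y) 0 /\
  limiting_normal_cone (tangent_cone D y) 0 `<=` limiting_normal_cone D y.
Proof.
split; first exact: regular_sub_limiting_normal_cone.
split; last exact: limiting_normal_tangent_cone_sub.
have TD_cone : tangent_cone (tangent_cone D y) 0 = tangent_cone D y.
  apply: tangent_cone_closed_cone; first exact: tangent_cone_closed.
    exact: tangent_cone0.
  by move=> w lam; exact: tangent_coneZ.
case: l hl => // l _ zs /limiting_normal_higher_tangent_cone_sub.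
rewrite -{1}TD_cone; apply: limiting_normal_tangent_cone_sub.
exact: tangent_cone_closed.
Qed.
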